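(* Let $X$ be the graph with vertices $x_0,x_1,x_2,x_3,x_4,\bar x_4$ and (besides loops) edges $x_0x_1, x_1x_2, x_2x_3, x_3x_4, x_4x_0, x_3\bar x_4, \bar x_4x_0$. Define $\tau:X\times X\to X$ by $\tau(x_i,x_j)=x_{i+j}$; $\tau(x_0,\bar x_4)=\tau(\bar x_4,x_0)=\bar x_4$; $\tau(x_i,\bar x_4)=\tau(\bar x_4,x_i)=x_{i+4}$ for $i\ne0$; $\tau(\bar x_4,\bar x_4)=x_3$ (subscripts mod 5). Then $\tau$ is $\mathrm{NP}_1$-continuous, $(X,x_0,\tau)$ is a unital (hence pointed) $\mathrm{NP}_1$-digital H-space, and $(X,x_0,\tau)$ is not pointed homotopy-associative; consequently it is not pointed H-equivalent to any $\mathrm{NP}_1$-digital topological group.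
   Context: Digital images are finite reflexive graphs; continuous maps send adjacent points to adjacent points. On products, $\mathrm{NP}_1$ declares two tuples adjacent iff they differ in at most one coordinate, and in that coordinate the entries are adjacent. An $\mathrm{NP}_1$-homotopy from $f$ to $g:X\to Y$ is an $\mathrm{NP}_1$-continuous $H:X\times[0,m]_{\mathbb{Z}}\to Y$ with $H(\cdot,0)=f$, $H(\cdot,m)=g$; for pointed maps $(X,a)\to(Y,b)$ it is pointed if $H(a,t)=b$ for all $t$. An $\mathrm{NP}_1$-digital H-space is $(X,e,\mu)$ with $\mu:X\times X\to X$ $\mathrm{NP}_1$-continuous, $\mu\circ(\mathrm{id}_X,c_e)\simeq_1\mathrm{id}_X$, $\mu\circ(c_e,\mathrm{id}_X)\simeq_1\mathrm{id}_X$ ($(f,g)(x)=(f(x),g(x))$, $c_e$ constant); it is a pointed H-space if these homotopies are pointed; unital if the composites equal $\mathrm{id}_X$. It is pointed homotopy-associative if $\mu\circ(\mathrm{id}\times\mu)$ and $\mu\circ(\mu\times\mathrm{id})$ are homotopic by a pointed $\mathrm{NP}_1$-homotopy $(X\times X\times X,(e,e,e))\times[0,k]_{\mathbb{Z}}\to(X,e)$. Pointed H-equivalence: continuous pointed maps $f,g$ between the H-spaces with $f\circ g\simeq\mathrm{id}$, $g\circ f\simeq\mathrm{id}$, $f\circ\mu_X\simeq\mu_Y\circ(f\times f)$, $g\circ\mu_Y\simeq\mu_X\circ(g\times g)$, all by pointed $\mathrm{NP}_1$-homotopies. An $\mathrm{NP}_1$-digital topological group is a digital image with a group structure whose multiplication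 is $\mathrm{NP}_1$-continuous and inversion continuous. *)

From mathcomp Require Import all_boot all_fingroup.
Set Implicit Arguments. Unset Strict Implicit. Unset Printing Implicit Defensive.

Definition digital_image (A : finType) (adjA : rel A) :=
  reflexive adjA /\ symmetric adjA.

Definition dcont (A B : Type) (adjA : rel A) (adjB : rel B) (f : A -> B) :=
  forall x y, adjA x y -> adjB (f x) (f y).

(* NP_1 adjacency on a binary product (iterated products are nested pairs;
   nesting NP_1 gives NP_1 on the n-fold product) *)
Definition np1 (A B : eqType) (adjA : rel A) (adjB : rel B) : rel (A * B) :=
  fun p q => ((p.1 == q.1) && adjB p.2 q.2) || ((p.2 == q.2) && adjA p.1 q.1).

(* the digital interval [0,m]_Z, as 'I_m.+1 with c_2-adjacency *)
Definition iadj (m : nat) : rel 'I_m.+1 :=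
  fun i j => (i <= j.+1) && (j <= i.+1).

Definition np1_homotopic (A B : eqType) (adjA : rel A) (adjB : rel B)
  (f g : A -> B) :=
  exists m : nat, exists H : A * 'I_m.+1 -> B,
    dcont (np1 adjA (@iadj m)) adjB H /\
    (forall x, H (x, ord0) = f x) /\ (forall x, H (x, ord_max) = g x).

Definition np1_pointed_homotopic (A B : eqType) (adjA : rel A) (adjB : rel B)
  (a : A) (b : B) (f g : A -> B) :=
  exists m : nat, exists H : A * 'I_m.+1 -> B,
    dcont (np1 adjA (@iadj m)) adjB H /\
    (forall x, H (x, ord0) = f x) /\ (forall x, H (x, ord_max) = g x) /\
    (forall t, H (a, t) = b).

Definition H_space (A : eqType) (adj : rel A) (e : A) (mu : A * A -> A) :=
  dcont (np1 adj adj) adj mu /\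
  np1_homotopic adj adj (fun x => mu (x, e)) id /\
  np1_homotopic adj adj (fun x => mu (e, x)) id.

Definition pointed_H_space (A : eqType) (adj : rel A) (e : A) (mu : A * A -> A) :=
  dcont (np1 adj adj) adj mu /\
  np1_pointed_homotopic adj adj e e (fun x => mu (x, e)) id /\
  np1_pointed_homotopic adj adj e e (fun x => mu (e, x)) id.

Definition unital_H_space (A : eqType) (adj : rel A) (e : A) (mu : A * A -> A) :=
  dcont (np1 adj adj) adj mu /\
  (forall x, mu (x, e) = x) /\ (forall x, mu (e, x) = x).

(* pointed homotopy-associativity; X*X*X is (X*X)*X *)
Definition pointed_homotopy_associative (A : eqType) (adj : rel A) (e : A)
  (mu : A * A -> A) :=
  np1_pointed_homotopic (np1 (np1 adj adj) adj) adj ((e, e), e) e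
    (fun p => mu (p.1.1, mu (p.1.2, p.2)))
    (fun p => mu (mu p.1, p.2)).

Definition pointed_H_equivalent (X Y : eqType)
  (adjX : rel X) (eX : X) (muX : X * X -> X)
  (adjY : rel Y) (eY : Y) (muY : Y * Y -> Y) :=
  exists (f : X -> Y) (g : Y -> X),
    dcont adjX adjY f /\ f eX = eY /\
    dcont adjY adjX g /\ g eY = eX /\
    np1_pointed_homotopic adjY adjY eY eY (fun y => f (g y)) id /\
    np1_pointed_homotopic adjX adjX eX eX (fun x => g (f x)) id /\
    np1_pointed_homotopic (np1 adjX adjX) adjY (eX, eX) eY
      (fun p => f (muX p)) (fun p => muY (f p.1, f p.2)) /\
    np1_pointed_homotopic (np1 adjY adjY) adjX (eY, eY) eX
      (fun p => g (muY p)) (fun p => muX (g p.1, g p.2)).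

Definition np1_digital_topological_group (G : finGroupType) (adj : rel G) :=
  digital_image adj /\
  dcont (np1 adj adj) adj (fun p : G * G => (p.1 * p.2)%g) /\
  dcont adj adj (fun x : G => (x^-1)%g).

(* The example: vertices x_0..x_4 are 0..4, \bar x_4 is 5, in 'I_6 *)
Definition Xedges : seq (nat * nat) :=
  [:: (0,1); (1,2); (2,3); (3,4); (4,0); (3,5); (5,0)].

Definition adjX : rel 'I_6 :=
  fun a b => [|| a == b, (val a, val b) \in Xedges | (val b, val a) \in Xedges].

Definition x0 : 'I_6 := inord 0.

Definition tau (p : 'I_6 * 'I_6) : 'I_6 :=
  let i := val p.1 in let j := val p.2 in
  if (i < 5) && (j < 5) then inord ((i + j) %% 5)
  else if (i == 5) && (j == 5) then inord 3
  else let k := if i == 5 then j else i in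
       if k == 0 then inord 5 else inord ((k + 4) %% 5).

(* The maps id, tau and (a, b, c) |-> tau (a, tau (b, c)) are rigid: a pointed
   continuous map that is pointwise adjacent to one of them coincides with it,
   so a pointed NP_1-homotopy starting or ending at such a map is constant.
   Rigidity of a map into a finite image is decided by arc consistency: starting
   from the sets of values adjacent to the map, repeatedly discard every value
   at a point p that is adjacent to no remaining value at some neighbour of p;
   the map is rigid once a single value survives at each point.
   Pointed homotopy-associativity of tau would thus force strict associativity,
   which fails.  If f, g were a pointed H-equivalence with a group, rigidity
   would give g (f a) = a, g (f a * f b) = tau (a, b) and
   g (f a * (f b * f c)) = tau (a, tau (b, c)); precomposing the homotopy
   g (x * y) ~ tau (g x, g y) with (a, b, c) |-> (f a * f b, f c) then yields,
   by associativity in the group, a pointed homotopy between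
   tau (a, tau (b, c)) and tau (tau (a, b), c). *)
From mathcomp Require Import all_boot all_fingroup.
From mathcomp Require Import zify.
Set Implicit Arguments. Unset Strict Implicit. Unset Printing Implicit Defensive.

Lemma dcont_comp (A B C : Type) (adjA : rel A) (adjB : rel B) (adjC : rel C)
    (f : A -> B) (g : B -> C) :
  dcont adjA adjB f -> dcont adjB adjC g -> dcont adjA adjC (g \o f).
Proof. by move=> fc gc x y /fc /gc. Qed.

Lemma dcont_np1_prod (A A' B B' : eqType) (adjA : rel A) (adjA' : rel A')
    (adjB : rel B) (adjB' : rel B') (f : A -> A') (g : B -> B') :
  dcont adjA adjA' f -> dcont adjB adjB' g ->
  dcont (np1 adjA adjB) (np1 adjA' adjB') (fun p => (f p.1, g p.2)).
Proof.
move=> fc gc [x y] [x' y'] /orP[/andP[/eqP/= <- yy'] | /andP[/eqP/= <- xx']].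
  by rewrite /np1 /= eqxx gc.
by rewrite /np1 /= eqxx fc ?orbT.
Qed.

Lemma dcont_np1_assoc (A B C : eqType) (adjA : rel A) (adjB : rel B)
    (adjC : rel C) :
  dcont (np1 (np1 adjA adjB) adjC) (np1 adjA (np1 adjB adjC))
    (fun p => (p.1.1, (p.1.2, p.2))).
Proof.
move=> [[x y] z] [[x' y'] z']; rewrite /np1 /= xpair_eqE.
case/orP=> [/andP[/andP[/eqP-> /eqP->] zz'] | /andP[/eqP-> /orP[]]].
- by rewrite !eqxx zz'.
- by case/andP=> /eqP-> yy'; rewrite !eqxx yy' orbT.
- by case/andP=> /eqP-> xx'; rewrite !eqxx xx' !orbT.
Qed.

Lemma iadj_rev m (i j : 'I_m.+1) : iadj (rev_ord i) (rev_ord j) = iadj i j.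
Proof.
rewrite /iadj /=; have := ltn_ord i; have := ltn_ord j.
by case: (leqP i j.+1); case: (leqP j i.+1); lia.
Qed.

Section Rigidity.
Variables (A B : eqType) (adjA : rel A) (adjB : rel B) (a : A) (b : B).

Definition pointed_rigid (r : A -> B) :=
  forall h, dcont adjA adjB h -> h a = b -> (forall x, adjB (r x) (h x)) ->
  h =1 r.

Lemma eq_pointed_rigid r r' : r =1 r' -> pointed_rigid r -> pointed_rigid r'.
Proof.
move=> rr' rigid_r h hc ha hr x; rewrite -rr'.
by apply: rigid_r => // y; rewrite rr'.
Qed.

Lemma np1_pointed_homotopic_sym f g :
  np1_pointed_homotopic adjA adjB a b f g ->
  np1_pointed_homotopic adjA adjB a b g f.
Proof.
case=> m [H [Hc [H0 [H1 Ha]]]].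
have rev_cont : dcont (@iadj m) (@iadj m) (@rev_ord _) by move=> i j; rewrite iadj_rev.
exists m, (H \o fun p => (p.1, rev_ord p.2)); split; last split; last split.
- exact: dcont_comp (dcont_np1_prod (fun _ _ => id) rev_cont) Hc.
- by move=> x; rewrite /= -H1; congr (H (x, _)); apply: val_inj => /=; lia.
- by move=> x; rewrite /= -H0; congr (H (x, _)); apply: val_inj => /=; lia.
- by move=> t; rewrite /= Ha.
Qed.

Lemma np1_pointed_homotopic_rigidl f g :
  pointed_rigid f -> np1_pointed_homotopic adjA adjB a b f g -> g =1 f.
Proof.
move=> rigid_f [m [H [Hc [H0 [H1 Ha]]]]] x; rewrite -H1.
suff Ht : forall t, H \o pair^~ t =1 f by exact: Ht.
case=> k; elim: k => [|k IH] lt_km y.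
  by rewrite /= -H0; congr (H (y, _)); apply: val_inj.
apply: rigid_f => [z z' zz' | | z].
- by apply: Hc; rewrite /np1 /= eqxx zz' orbT.
- exact: Ha.
- rewrite -(IH (ltnW lt_km) z); apply: Hc.
  by rewrite /np1 /= eqxx /iadj /= ltnSn (leqW (leqnSn k)).
Qed.

Lemma np1_pointed_homotopic_rigidr f g :
  pointed_rigid g -> np1_pointed_homotopic adjA adjB a b f g -> f =1 g.
Proof.
by move=> rigid_g /np1_pointed_homotopic_sym; apply: np1_pointed_homotopic_rigidl.
Qed.

Lemma eq_np1_pointed_homotopic f f' g g' :
  f =1 f' -> g =1 g' -> np1_pointed_homotopic adjA adjB a b f g ->
  np1_pointed_homotopic adjA adjB a b f' g'.
Proof.
move=> ff' gg' [m [H [Hc [H0 [H1 Ha]]]]].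
exists m, H; split=> //; split=> [x|]; first by rewrite H0.
by split=> // x; rewrite H1.
Qed.

Lemma np1_pointed_homotopic_refl f :
  reflexive adjB -> dcont adjA adjB f -> f a = b ->
  np1_pointed_homotopic adjA adjB a b f f.
Proof.
move=> reflB fc fa; exists 0, (f \o fst); do !split => //.
by move=> [x s] [y t] /orP[/andP[/eqP/= -> _] | /andP[_ /fc]].
Qed.

Lemma np1_pointed_homotopic_comp (C : eqType) (adjC : rel C) (c : C)
    (phi : C -> A) f g :
  dcont adjC adjA phi -> phi c = a -> np1_pointed_homotopic adjA adjB a b f g ->
  np1_pointed_homotopic adjC adjB c b (f \o phi) (g \o phi).
Proof.
move=> phic phia [m [H [Hc [H0 [H1 Ha]]]]].
exists m, (H \o fun p => (phi p.1, p.2)); split; last split; last split.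
- exact: dcont_comp (dcont_np1_prod phic (fun _ _ => id)) Hc.
- by move=> x; rewrite /= H0.
- by move=> x; rewrite /= H1.
- by move=> t; rewrite /= phia Ha.
Qed.

Lemma np1_pointed_homotopic_homotopic f g :
  np1_pointed_homotopic adjA adjB a b f g -> np1_homotopic adjA adjB f g.
Proof. by case=> m [H [Hc [H0 [H1 _]]]]; exists m, H. Qed.

End Rigidity.

Section ArcConsistency.
Variables (T B : eqType) (adjT : rel T) (adjB : rel B) (ts : seq T) (bs : seq B).
Hypotheses (ts_full : forall p, p \in ts) (bs_full : forall y, y \in bs).

Definition domain (D : seq (seq B)) (p : T) : seq B := nth bs D (index p ts).

Definition neighbour_indices : seq (seq nat) :=
  [seq [seq index q ts | q <- ts & adjT p q] | p <- ts].

Definition refine_domains (N : seq (seq nat)) (D : seq (seq B)) : seq (seq B) :=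
  [seq [seq y <- nth bs D i | all (fun j => has (adjB y) (nth bs D j)) (nth [::] N i)]
  | i <- iota 0 (size ts)].

Definition initial_domains (a : T) (b : B) (r : T -> B) : seq (seq B) :=
  [seq if p == a then [:: b] else [seq y <- bs | adjB (r p) y] | p <- ts].

Definition rigid_check (n : nat) (a : T) (b : B) (r : T -> B) : bool :=
  let D := iter n (refine_domains neighbour_indices) (initial_domains a b r) in
  all (fun p => domain D p == [:: r p]) ts.

Lemma domain_map (F : T -> seq B) p : domain (map F ts) p = F p.
Proof. by rewrite /domain (nth_map p) ?nth_index ?index_mem. Qed.

Lemma domain_map_iota (F : nat -> seq B) p :
  domain [seq F i | i <- iota 0 (size ts)] p = F (index p ts).
Proof. by rewrite /domain (nth_map 0) ?nth_iota ?size_iota ?index_mem. Qed.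

Lemma refine_domains_sound h D :
  dcont adjT adjB h -> (forall p, h p \in domain D p) ->
  forall p, h p \in domain (refine_domains neighbour_indices D) p.
Proof.
move=> hc hD p; rewrite domain_map_iota mem_filter hD andbT.
rewrite (nth_map p) ?index_mem // nth_index //.
apply/allP=> j /mapP[q]; rewrite mem_filter => /andP[pq _] ->.
by apply/hasP; exists (h q); [exact: hD | exact: hc].
Qed.

Lemma rigid_check_sound n a b r :
  rigid_check n a b r -> pointed_rigid adjT adjB a b r.
Proof.
move=> /allP check h hc ha hr p.
have hD k q : h q \in domain (iter k (refine_domains neighbour_indices)
                                   (initial_domains a b r)) q.
  elim: k q => [|k IH] q /=; last exact: refine_domains_sound.
  rewrite domain_map; case: eqP => [->|_]; first by rewrite ha mem_head.
  by rewrite mem_filter hr bs_full.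
by have := hD n p; rewrite (eqP (check p (ts_full p))) inE => /eqP.
Qed.

End ArcConsistency.

Lemma unital_pointed_H_space (A : eqType) (adj : rel A) e mu :
  reflexive adj -> unital_H_space adj e mu -> pointed_H_space adj e mu.
Proof.
move=> refl_adj [mu_cont [mu_e_r mu_e_l]].
have id_id := np1_pointed_homotopic_refl (f := id) refl_adj (fun _ _ => id) (erefl e).
by split=> //; split; apply: (eq_np1_pointed_homotopic _ _ id_id).
Qed.

Lemma pointed_H_space_H_space (A : eqType) (adj : rel A) e mu :
  pointed_H_space adj e mu -> H_space adj e mu.
Proof.
case=> mu_cont [/np1_pointed_homotopic_homotopic hr /np1_pointed_homotopic_homotopic hl].
by split.
Qed.

Lemma pointed_homotopy_associative_rigid (A : eqType) (adj : rel A) e mu :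
  pointed_rigid (np1 (np1 adj adj) adj) adj ((e, e), e) e
    (fun p => mu (p.1.1, mu (p.1.2, p.2))) ->
  pointed_homotopy_associative adj e mu ->
  forall x y z, mu (x, mu (y, z)) = mu (mu (x, y), z).
Proof.
by move=> rigid_assoc /(np1_pointed_homotopic_rigidl rigid_assoc) assoc x y z;
  rewrite (assoc ((x, y), z)).
Qed.

Section RigidHEquivalence.
Variables (A B : eqType) (adjA : rel A) (e : A) (mu : A * A -> A).
Variables (adjB : rel B) (eB : B) (muB : B * B -> B).
Hypotheses (muB_cont : dcont (np1 adjB adjB) adjB muB) (muB_e : muB (eB, eB) = eB).
Hypothesis muB_assoc : forall x y z, muB (x, muB (y, z)) = muB (muB (x, y), z).
Hypothesis id_rigid : pointed_rigid adjA adjA e e id.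
Hypothesis mu_rigid : pointed_rigid (np1 adjA adjA) adjA (e, e) e mu.
Hypothesis mu_assoc_rigid : pointed_rigid (np1 (np1 adjA adjA) adjA) adjA
  ((e, e), e) e (fun p => mu (p.1.1, mu (p.1.2, p.2))).

Lemma pointed_H_equivalent_homotopy_associative :
  pointed_H_equivalent adjA e mu adjB eB muB -> pointed_homotopy_associative adjA e mu.
Proof.
case=> f [g [f_cont [fe [_ [_ [_ [gf_id [_ g_hom]]]]]]]].
have gfK : forall x, g (f x) = x := np1_pointed_homotopic_rigidr id_rigid gf_id.
have ff_cont := dcont_np1_prod f_cont f_cont.
have mulf_cont := dcont_comp ff_cont muB_cont.
have mulf_e : muB (f e, f e) = eB by rewrite fe muB_e.
have g_mulf : forall p, g (muB (f p.1, f p.2)) = mu p.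
  apply: np1_pointed_homotopic_rigidr mu_rigid _.
  have hom := np1_pointed_homotopic_comp (c := (e, e)) ff_cont (congr2 pair fe fe) g_hom.
  by apply: (eq_np1_pointed_homotopic _ _ hom) => // [[x y]]; rewrite /= !gfK.
have g_mulf3 : forall p, g (muB (f p.1.1, muB (f p.1.2, f p.2))) =
                          mu (p.1.1, mu (p.1.2, p.2)).
  apply: np1_pointed_homotopic_rigidr mu_assoc_rigid _.
  have phi_cont := dcont_comp (@dcont_np1_assoc _ _ _ adjA adjA adjA)
                              (dcont_np1_prod f_cont mulf_cont).
  have hom := np1_pointed_homotopic_comp (c := (e, e, e)) phi_cont
                (congr2 pair fe mulf_e) g_hom.
  by apply: (eq_np1_pointed_homotopic _ _ hom) => // p; rewrite /= gfK (g_mulf (p.1.2, p.2)).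
have psi_cont := dcont_np1_prod mulf_cont f_cont.
have hom := np1_pointed_homotopic_comp (c := (e, e, e)) psi_cont
              (congr2 pair mulf_e fe) g_hom.
apply: (eq_np1_pointed_homotopic _ _ hom) => p /=; first by rewrite -muB_assoc g_mulf3.
by rewrite gfK g_mulf.
Qed.

End RigidHEquivalence.

(* [inord] and [ord_enum] go through the opaque [idP], so [vm_compute] cannot
   evaluate them; these transparent variants can be evaluated. *)
Definition inord_eq n (k : nat) : 'I_n.+1 := odflt ord0 (insub_eq _ k).
Definition ord_enum_eq n : seq 'I_n := pmap (insub_eq _) (iota 0 n).

Lemma inord_eqE n k : inord_eq n k = inord k.
Proof. by rewrite /inord_eq insub_eqE. Qed.

Lemma mem_ord_enum_eq n (i : 'I_n) : i \in ord_enum_eq n.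
Proof. by rewrite /ord_enum_eq (eq_pmap (insub_eqE _)) mem_ord_enum. Qed.

Lemma mem_allpairs_full (A B : eqType) (s : seq A) (t : seq B) :
  (forall x, x \in s) -> (forall y, y \in t) ->
  forall p : A * B, p \in [seq (x, y) | x <- s, y <- t].
Proof. by move=> s_full t_full [x y]; apply: allpairs_f. Qed.

Definition X1 : seq 'I_6 := ord_enum_eq 6.
Definition X2 : seq ('I_6 * 'I_6) := [seq (x, y) | x <- X1, y <- X1].
Definition X3 : seq ('I_6 * 'I_6 * 'I_6) := [seq (p, z) | p <- X2, z <- X1].

Lemma mem_X1 x : x \in X1. Proof. exact: mem_ord_enum_eq. Qed.
Lemma mem_X2 p : p \in X2. Proof. exact: (mem_allpairs_full mem_X1 mem_X1). Qed.
Lemma mem_X3 p : p \in X3. Proof. exact: (mem_allpairs_full mem_X2 mem_X1). Qed.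

Definition tau_eq (p : 'I_6 * 'I_6) : 'I_6 :=
  let i := val p.1 in let j := val p.2 in
  if (i < 5) && (j < 5) then inord_eq 5 ((i + j) %% 5)
  else if (i == 5) && (j == 5) then inord_eq 5 3
  else let k := if i == 5 then j else i in
       if k == 0 then inord_eq 5 5 else inord_eq 5 ((k + 4) %% 5).

Lemma tauE p : tau p = tau_eq p.
Proof. by rewrite /tau /tau_eq /= !inord_eqE. Qed.

Lemma x0E : x0 = ord0.
Proof. by apply: val_inj; rewrite /= inordK. Qed.

Lemma adjX_refl : reflexive adjX.
Proof. by move=> x; rewrite /adjX eqxx. Qed.

Lemma adjX_sym : symmetric adjX.
Proof.
have sym : all (fun x => all (fun y => adjX x y == adjX y x) X1) X1 by vm_compute.
by move=> x y; apply/eqP; apply: (allP (allP sym x (mem_X1 x)) y (mem_X1 y)).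
Qed.

Lemma tau_cont : dcont (np1 adjX adjX) adjX tau.
Proof.
have cont : all (fun p => all (fun q =>
    np1 adjX adjX p q ==> adjX (tau_eq p) (tau_eq q)) X2) X2 by vm_compute.
by move=> p q pq; rewrite !tauE (implyP (allP (allP cont p (mem_X2 p)) q (mem_X2 q))).
Qed.

Lemma tau_unital : unital_H_space adjX x0 tau.
Proof.
have unit : all (fun x => (tau_eq (x, ord0) == x) && (tau_eq (ord0, x) == x)) X1
  by vm_compute.
split; first exact: tau_cont.
by split=> x; rewrite tauE x0E; have /andP[/eqP ? /eqP ?] := allP unit x (mem_X1 x).
Qed.

Lemma tau_not_associative :
  ~ (forall x y z, tau (x, tau (y, z)) = tau (tau (x, y), z)).
Proof.
(* (\bar x_4 \bar x_4) x_1 = x_4, whereas \bar x_4 (\bar x_4 x_1) = \bar x_4. *)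
move=> /(_ (inord_eq 5 5) (inord_eq 5 5) (inord_eq 5 1)).
by rewrite !tauE => /eqP; vm_compute.
Qed.

Lemma id_rigid : pointed_rigid adjX adjX x0 x0 id.
Proof. by rewrite x0E; apply: (rigid_check_sound (n := 10) mem_X1 mem_X1); vm_compute. Qed.

Lemma tau_rigid : pointed_rigid (np1 adjX adjX) adjX (x0, x0) x0 tau.
Proof.
apply: eq_pointed_rigid (fun p => esym (tauE p)) _; rewrite x0E.
by apply: (rigid_check_sound (n := 12) mem_X2 mem_X1); vm_compute.
Qed.

Lemma tau_assoc_rigid :
  pointed_rigid (np1 (np1 adjX adjX) adjX) adjX ((x0, x0), x0) x0
    (fun p => tau (p.1.1, tau (p.1.2, p.2))).
Proof.
apply: (eq_pointed_rigid (r := (fun p => tau_eq (p.1.1, tau_eq (p.1.2, p.2))))).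
  by move=> p; rewrite !tauE.
by rewrite x0E; apply: (rigid_check_sound (n := 14) mem_X3 mem_X1); vm_compute.
Qed.

Theorem mainTheorem15 :
  digital_image adjX /\
  dcont (np1 adjX adjX) adjX tau /\
  unital_H_space adjX x0 tau /\
  pointed_H_space adjX x0 tau /\
  H_space adjX x0 tau /\
  ~ pointed_homotopy_associative adjX x0 tau /\
  (forall (G : finGroupType) (adjG : rel G),
     np1_digital_topological_group adjG ->
     ~ pointed_H_equivalent adjX x0 tau adjG 1%g (fun p : G * G => (p.1 * p.2)%g)).
Proof.
have tau_pointed := unital_pointed_H_space adjX_refl tau_unital.
have tau_not_pha : ~ pointed_homotopy_associative adjX x0 tau.
  by move/(pointed_homotopy_associative_rigid tau_assoc_rigid)/tau_not_associative.
split; first by split; [exact: adjX_refl | exact: adjX_sym].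
split; first exact: tau_cont.
split; first exact: tau_unital.
split; first exact: tau_pointed.
split; first exact: pointed_H_space_H_space.
split; first exact: tau_not_pha.
move=> G adjG [_ [mulG_cont _]].
by move/(pointed_H_equivalent_homotopy_associative mulG_cont (mulg1 (1%g : G)) (@mulgA G)
           id_rigid tau_rigid tau_assoc_rigid).
Qed.
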